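(* Let $|\psi\rangle_{ABC}$ be a three-qubit pure state, each qubit carrying the Hamiltonian $H_A=H_B=H_C=|1\rangle\langle1|$, and let $s=\{A,B,C\}$. If $M^{(s)}_E(|\psi\rangle_{ABC})>\frac12$, then $|\psi\rangle_{ABC}$ is genuinely multipartite entangled, i.e. it is not of the form $|\phi\rangle_{XY}\otimes|\chi\rangle_Z$ for any bipartition $\{X,Y\}|Z$ of $\{A,B,C\}$.
   Context: For a multi-qubit subsystem $X$ the Hamiltonian is $H_X=\sum_{i\in X}H_i$. For a state $\rho_X$ with eigenvalues $p_0\ge p_1\ge\cdots$ and $H_X$ with eigenvalues $0=\epsilon_0\le\epsilon_1\le\cdots$, the passive-state energy is $\mathrm{tr}(\rho_X^pH_X)=\sum_jp_j\epsilon_j$. For a pure state $|\psi\rangle$ and $X\subseteq\{A,B,C\}$, $\Delta_{X|X^c}(|\psi\rangle)=\mathrm{tr}(\rho_X^pH_X)+\mathrm{tr}(\rho_{X^c}^pH_{X^c})$ with $\rho_X$ the marginal, and $\Delta=0$ for $X=\emptyset$ or $X=\{A,B,C\}$. Then $M^{(s)}_E(|\psi\rangle)=2^{-3}\sum_{X\subseteq\{A,B,C\}}\Delta_{X|X^c}(|\psi\rangle)$. *)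

From HB Require Import structures.
From mathcomp Require Import all_boot all_order all_algebra.
Set Implicit Arguments. Unset Strict Implicit. Unset Printing Implicit Defensive.
Import Order.TTheory GRing.Theory Num.Theory.
Local Open Scope ring_scope.

(* Three qubits, labelled A = 0, B = 1, C = 2 (elements of 'I_3).
   A computational-basis configuration is a bit string x : {ffun 'I_3 -> bool}
   (x i = true means qubit i is in |1>).  A pure state is a normalised
   amplitude function psi : {ffun 'I_3 -> bool} -> C, over an algebraically
   closed numeric field C (e.g. the complex numbers). *)

Definition cfg := {ffun 'I_3 -> bool}.

Section Defs.
Variable C : numClosedFieldType.

Definition normalized (psi : cfg -> C) : Prop :=
  \sum_(x : cfg) psi x * (psi x)^* = 1.

(* Configurations of the qubits in X: bit strings vanishing outside X. *)
Definition cfgOn (X : {set 'I_3}) :=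
  {x : cfg | [forall i, (i \notin X) ==> ~~ x i]}.

Definition join (X : {set 'I_3}) (a c : cfg) : cfg :=
  [ffun i => if i \in X then a i else c i].

(* Reduced density matrix rho_X = tr_{X^c} |psi><psi|, indexed by cfgOn X. *)
Definition marginal (psi : cfg -> C) (X : {set 'I_3}) (a b : cfgOn X) : C :=
  \sum_(c : cfgOn (~: X)) psi (join X (val a) (val c))
                        * (psi (join X (val b) (val c)))^*.

(* H_X = sum_{i in X} |1><1|_i : diagonal, entry = number of qubits of X in |1>. *)
Definition hamX (X : {set 'I_3}) (a b : cfgOn X) : C :=
  if a == b then (#|[set i in X | val a i]|)%:R else 0.

Definition toMx (T : finType) (f : T -> T -> C) : 'M[C]_#|T| :=
  \matrix_(i, j) f (enum_val i) (enum_val j).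

Definition eigs n (M : 'M[C]_n) : seq C :=
  projT1 (closed_field_poly_normal (char_poly M)).

(* Passive-state energy tr(rho^p H) = sum_j p_j eps_j with p sorted
   decreasingly and eps sorted increasingly. *)
Definition passiveEnergy n (rho H : 'M[C]_n) : C :=
  \sum_(j < n) (sort (fun x y => y <= x) (eigs rho))`_j
               * (sort (fun x y => x <= y) (eigs H))`_j.

Definition passiveX (psi : cfg -> C) (X : {set 'I_3}) : C :=
  passiveEnergy (toMx (marginal psi (X:=X))) (toMx (@hamX X)).

Definition Delta (psi : cfg -> C) (X : {set 'I_3}) : C :=
  if (X == set0) || (X == setT) then 0
  else passiveX psi X + passiveX psi (~: X).

Definition ME (psi : cfg -> C) : C :=
  (2 ^+ 3)^-1 * \sum_(X : {set 'I_3}) Delta psi X.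

(* psi is a product |phi>_{XY} (x) |chi>_Z across the bipartition {X,Y}|Z,
   where Z = {k}: phi does not depend on qubit k. *)
Definition productAcross (psi : cfg -> C) (k : 'I_3) : Prop :=
  exists (phi : cfg -> C) (chi : bool -> C),
    (forall x y : cfg, (forall i, i != k -> x i = y i) -> phi x = phi y) /\
    forall x : cfg, psi x = phi x * chi (x k).

Definition genuinelyEntangled (psi : cfg -> C) : Prop :=
  forall k : 'I_3, ~ productAcross psi k.

End Defs.

(* For a one-qubit cut {i} | {j, k}, write psi as the matrix P with rows indexed
   by the configurations of qubit i and columns by those of j, k.  Then
   rho_i = P P^* has eigenvalues r1 >= r2 >= 0 with r1 + r2 = 1, and by
   Sylvester's determinant identity rho_jk = P^T (P^T)^* has eigenvalues
   r1, r2, 0, 0.  Paired with the spectra {0, 1} of H_i and {0, 1, 1, 2} of H_jk,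
   both passive energies equal r2 <= 1/2, so M_E is half the sum of the three
   values r2.  A product across k makes rho_k pure (P has rank one), so its r2
   vanishes and M_E <= 1/2. *)

From HB Require Import structures.
From mathcomp Require Import all_boot all_order all_algebra.
From mathcomp Require Import ring.
Set Implicit Arguments. Unset Strict Implicit. Unset Printing Implicit Defensive.
Import Order.TTheory GRing.Theory Num.Theory.
Local Open Scope ring_scope.
Local Open Scope sesquilinear_scope.

Lemma sort_perm_sorted (T : eqType) (P : {pred T}) (leT : rel T) (s t : seq T) :
  {in P &, total leT} -> {in P & &, transitive leT} ->
  {in P &, antisymmetric leT} ->
  perm_eq s t -> all P t -> sorted leT t -> sort leT s = t.
Proof.
move=> leT_total leT_tr leT_anti st /allP Pt t_sorted.
have Ps x : x \in s -> x \in P by rewrite (perm_mem st) => /Pt.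
rewrite (perm_sort_inP _ _ _ _ st) ?(sorted_sort_in leT_tr) //; first by apply/allP.
- by move=> x y /Ps xP /Ps yP; apply: leT_total.
- by move=> x y z /Ps ? /Ps ? /Ps ?; apply: leT_tr.
- by move=> x y /Ps ? /Ps ?; apply: leT_anti.
Qed.

Lemma char_poly_mulmxC (R : comNzRingType) m n (U : 'M[R]_(m, n)) (V : 'M[R]_(n, m)) :
  'X^n * char_poly (U *m V) = 'X^m * char_poly (V *m U).
Proof.
rewrite /char_poly /char_poly_mx.
set U' := map_mx polyC U; set V' := map_mx polyC V.
have -> : map_mx polyC (U *m V) = U' *m V' by rewrite map_mxM.
have -> : map_mx polyC (V *m U) = V' *m U' by rewrite map_mxM.
set M := block_mx ('X%:M : 'M_m) U' V' (1%:M : 'M_n).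
have detM : \det M = \det ('X%:M - U' *m V').
  have -> : M = block_mx 1%:M U' 0 1%:M *m block_mx ('X%:M - U' *m V') 0 V' 1%:M.
    by rewrite mulmx_block !mul1mx !mul0mx ?mulmx0 ?mulmx1 ?add0r ?addr0 subrK.
  by rewrite det_mulmx det_ublock det_lblock !det1 !mul1r mulr1.
have : \det (block_mx 1%:M 0 (- V') ('X%:M : 'M_n) *m M) =
       'X^m * \det ('X%:M - V' *m U').
  rewrite mulmx_block !mul1mx !mul0mx !mulmx1 !addr0.
  rewrite mulNmx mul_mx_scalar mul_scalar_mx addNr mulNmx addrC.
  by rewrite det_ublock det_scalar.
by rewrite det_mulmx det_lblock det1 mul1r det_scalar detM.
Qed.

Lemma char_poly_trmx (R : comNzRingType) n (A : 'M[R]_n) :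
  char_poly A^T = char_poly A.
Proof.
rewrite /char_poly -det_tr /char_poly_mx; congr (\det _).
by rewrite linearB /= tr_scalar_mx map_trmx trmxK.
Qed.

Lemma det_rank_lt (F : fieldType) n (A : 'M[F]_n) : (\rank A < n)%N -> \det A = 0.
Proof.
move=> rkA; apply/eqP; apply: contraTT rkA.
by rewrite -unitfE -unitmxE -row_free_unit => /eqP ->; rewrite ltnn.
Qed.

Section Spectrum.
Variable C : numClosedFieldType.

Lemma eigsE n (A : 'M[C]_n) : char_poly A = \prod_(z <- eigs A) ('X - z%:P).
Proof.
rewrite /eigs; case: closed_field_poly_normal => rs /= ->.
by rewrite (monicP (char_poly_monic A)) scale1r.
Qed.

Lemma size_eigs n (A : 'M[C]_n) : size (eigs A) = n.
Proof. by have := size_char_poly A; rewrite eigsE size_prod_XsubC => -[]. Qed.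

Lemma perm_eigs n (A : 'M[C]_n) s :
  char_poly A = \prod_(z <- s) ('X - z%:P) -> perm_eq (eigs A) s.
Proof. by move=> cpA; apply: prod_XsubC_eq; rewrite -eigsE. Qed.

Lemma mxtrace_eigs n (A : 'M[C]_n) : \tr A = \sum_(z <- eigs A) z.
Proof.
case: n A => [|n] A.
  rewrite /mxtrace big_ord0.
  by have := size_eigs A; case: (eigs A) => // _; rewrite big_nil.
have := @coefPn_prod_XsubC _ (eigs A).
by rewrite -eigsE size_eigs char_poly_trace // => /(_ isT) /oppr_inj.
Qed.

Lemma det_eigs n (A : 'M[C]_n) : \det A = \prod_(z <- eigs A) z.
Proof.
have := char_poly_det A; rewrite eigsE coef0_prod_XsubC size_eigs.
by move=> /lreg_sign.
Qed.

Lemma eigs_gram_ge0 m n (P : 'M[C]_(m, n)) r : r \in eigs (P *m P ^t*) -> 0 <= r.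
Proof.
move=> r_eig; have : eigenvalue (P *m P ^t*) r.
  by rewrite eigenvalue_root_char eigsE root_prod_XsubC.
case/eigenvalueP => v vPr v_neq0.
have dotvP : dotmx (v *m P) (v *m P) = r * dotmx v v.
  by rewrite !dotmxE trmx_mul map_mxM mulmxA -(mulmxA v) vPr -scalemxAl mxE.
have dotv_gt0 : 0 < dotmx v v by rewrite dnorm_gt0.
by rewrite -(pmulr_lge0 _ dotv_gt0) -dotvP dnorm_ge0.
Qed.

Lemma perm_eigs_gram_trmx m n (P : 'M[C]_(m, n)) : (m <= n)%N ->
  perm_eq (eigs (P^T *m P^T ^t*)) (eigs (P *m P ^t*) ++ nseq (n - m) 0).
Proof.
move=> le_mn; apply: perm_eigs.
have := char_poly_mulmxC P^T (P^T ^t*).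
have -> : P^T ^t* *m P^T = (P *m P ^t*)^T by rewrite trmx_mul map_trmx !trmxK.
rewrite char_poly_trmx -[in 'X^n](subnKC le_mn) exprD -mulrA.
move=> /(mulfI (monic_neq0 (monicXn _ m))) ->.
by rewrite eigsE big_cat big_nseq iter_mulr_1 subr0 mulrC.
Qed.

Lemma passiveEnergyE n (rho H : 'M[C]_n) (p e : seq C) :
  perm_eq (eigs rho) p -> all (mem Num.real) p -> sorted >=%R p ->
  perm_eq (eigs H) e -> all (mem Num.real) e -> sorted <=%R e ->
  passiveEnergy rho H = \sum_(j < n) p`_j * e`_j.
Proof.
move=> rho_p p_real p_sorted H_e e_real e_sorted.
have sort_le : sort <=%R (eigs H) = e.
  apply: (sort_perm_sorted (P := Num.real)) => //.
  - by move=> x y xR yR; apply: real_leVge.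
  - by move=> y x z _ _ _; apply: le_trans.
  - by move=> x y _ _; apply: le_anti.
have sort_ge : sort >=%R (eigs rho) = p.
  apply: (sort_perm_sorted (P := Num.real)) => //.
  - by move=> x y xR yR; apply: real_leVge.
  - by move=> y x z _ _ _ /= xy yz; apply: le_trans yz xy.
  - by move=> x y _ _ /=; rewrite andbC => /le_anti.
by rewrite /passiveEnergy sort_le sort_ge.
Qed.

End Spectrum.

Lemma card_set_in_sum (T : finType) (X : {set T}) (b : pred T) :
  #|[set i in X | b i]| = (\sum_(i in X) b i)%N.
Proof.
rewrite -sum1_card big_mkcond [RHS]big_mkcond /=; apply: eq_bigr => i _.
by rewrite inE; case: (i \in X); case: (b i).
Qed.

Lemma cfgOn_notin (X : {set 'I_3}) (a : cfgOn X) i : i \notin X -> val a i = false.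
Proof. by move=> iX; have /forallP/(_ i) := valP a; rewrite iX => /negbTE. Qed.

Lemma restr_subproof (X : {set 'I_3}) (x : cfg) :
  [forall i, (i \notin X) ==> ~~ [ffun i => (i \in X) && x i] i].
Proof. by apply/forallP => i; apply/implyP => iX; rewrite ffunE (negbTE iX). Qed.

Definition restr (X : {set 'I_3}) (x : cfg) : cfgOn X :=
  Sub [ffun i => (i \in X) && x i] (restr_subproof X x).

Lemma restrE (X : {set 'I_3}) x i : val (restr X x) i = (i \in X) && x i.
Proof. by rewrite /= ffunE. Qed.

Lemma join_restr (X : {set 'I_3}) x : join X (val (restr X x)) (val (restr (~: X) x)) = x.
Proof. by apply/ffunP => i; rewrite ffunE !restrE inE; case: (i \in X). Qed.

Lemma restr_join (X : {set 'I_3}) (a : cfgOn X) c : restr X (join X (val a) c) = a.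
Proof.
apply: val_inj; apply/ffunP => i; rewrite restrE ffunE.
by case: ifP => // iX; rewrite cfgOn_notin ?iX.
Qed.

Lemma restr_setC_join (X : {set 'I_3}) a (c : cfgOn (~: X)) :
  restr (~: X) (join X a (val c)) = c.
Proof.
apply: val_inj; apply/ffunP => i; rewrite restrE ffunE inE.
by case: ifP => // iX; rewrite cfgOn_notin // inE iX.
Qed.

Lemma join_setC (X : {set 'I_3}) a c : join (~: X) a c = join X c a.
Proof. by apply/ffunP => i; rewrite !ffunE inE; case: (i \in X). Qed.

Lemma sum_cfgOn_join (R : nmodType) (X : {set 'I_3}) (F : cfg -> R) :
  \sum_(a : cfgOn X) \sum_(c : cfgOn (~: X)) F (join X (val a) (val c)) = \sum_x F x.
Proof.
rewrite pair_bigA /=.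
pose split_cfg (x : cfg) := (restr X x, restr (~: X) x).
have split_bij : bijective split_cfg.
  exists (fun ac => join X (val ac.1) (val ac.2)) => [x|[a c]].
    by rewrite join_restr.
  by rewrite /split_cfg restr_join restr_setC_join.
rewrite (reindex split_cfg (onW_bij _ split_bij)) /=.
by apply: eq_bigr => x _; rewrite join_restr.
Qed.

Lemma perm_cfgOn1 (i : 'I_3) :
  perm_eq [seq val a i | a : cfgOn [set i] <- enum {: cfgOn [set i]}] [:: false; true].
Proof.
apply: uniq_perm => //.
  rewrite map_inj_uniq ?enum_uniq // => a a' aa'; apply/val_inj/ffunP => x.
  by have [->|xi] := eqVneq x i; rewrite // !cfgOn_notin // inE.
move=> b; have -> : b \in [:: false; true] by case: b.
by apply/mapP; exists (restr [set i] [ffun=> b]); rewrite ?mem_enum // restrE set11 ffunE.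
Qed.

Lemma perm_cfgOn2 (j k : 'I_3) : j != k ->
  perm_eq [seq (val a j, val a k) | a : cfgOn [set j; k] <- enum {: cfgOn [set j; k]}]
          [:: (false, false); (false, true); (true, false); (true, true)].
Proof.
move=> jk; apply: uniq_perm => //.
  rewrite map_inj_uniq ?enum_uniq // => a a' [ajj akk]; apply/val_inj/ffunP => x.
  have [->|xj] := eqVneq x j => //; have [->|xk] := eqVneq x k => //.
  by rewrite !cfgOn_notin // !inE negb_or xj xk.
move=> [b1 b2].
have -> : (b1, b2) \in [:: (false, false); (false, true); (true, false); (true, true)].
  by case: b1; case: b2.
apply/mapP; exists (restr [set j; k] [ffun x => if x == j then b1 else b2]).
  by rewrite mem_enum.
by rewrite !restrE !inE !eqxx orbT !ffunE eqxx /= eq_sym (negbTE jk).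
Qed.

Lemma card_cfgOn1 (i : 'I_3) : #|{: cfgOn [set i]}| = 2.
Proof.
rewrite cardE -(size_map (fun a : cfgOn [set i] => val a i)).
by rewrite (perm_size (perm_cfgOn1 i)).
Qed.

Lemma card_cfgOn2 (j k : 'I_3) : j != k -> #|{: cfgOn [set j; k]}| = 4.
Proof.
move=> jk; rewrite cardE -(size_map (fun a : cfgOn [set j; k] => (val a j, val a k))).
by rewrite (perm_size (perm_cfgOn2 jk)).
Qed.

Lemma setC1_ord3 (i : 'I_3) : exists j k : 'I_3, j != k /\ ~: [set i] = [set j; k].
Proof.
have : #|~: [set i]| == 2 by rewrite cardsC1 card_ord.
by case/cards2P => j [k [jk ->]]; exists j, k.
Qed.

Section Hamiltonian.
Variable C : numClosedFieldType.

Lemma perm_eigs_hamX (X : {set 'I_3}) :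
  perm_eq (eigs (toMx (hamX C (X:=X))))
          [seq (#|[set i in X | val a i]|)%:R | a : cfgOn X <- enum {: cfgOn X}].
Proof.
apply: perm_eigs; rewrite char_poly_trig; last first.
  apply/is_trig_mxP => i j ij; rewrite mxE /hamX (inj_eq enum_val_inj).
  by case: eqP ij => [->|]; rewrite ?ltnn.
rewrite big_map big_enum [RHS]big_enum_val /=; apply: eq_bigr => i _.
by rewrite mxE /hamX eqxx.
Qed.

Lemma perm_eigs_hamX1 (i : 'I_3) : perm_eq (eigs (toMx (hamX C (X:=[set i])))) [:: 0; 1].
Proof.
apply: perm_trans (perm_eigs_hamX _) _.
rewrite (eq_map (g := fun a : cfgOn [set i] => (nat_of_bool (val a i))%:R)); last first.
  by move=> a; rewrite card_set_in_sum big_set1.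
by rewrite (map_comp (fun b : bool => (nat_of_bool b)%:R)) (perm_map _ (perm_cfgOn1 i)).
Qed.

Lemma perm_eigs_hamX2 (j k : 'I_3) : j != k ->
  perm_eq (eigs (toMx (hamX C (X:=[set j; k])))) [:: 0; 1; 1; 2].
Proof.
move=> jk; apply: perm_trans (perm_eigs_hamX _) _.
pose weight (b : bool * bool) : C := (nat_of_bool b.1 + nat_of_bool b.2)%:R.
rewrite (eq_map (g := fun a : cfgOn [set j; k] => weight (val a j, val a k))); last first.
  by move=> a; rewrite card_set_in_sum big_setU1 ?inE // big_set1.
by rewrite (map_comp weight) (perm_map _ (perm_cfgOn2 jk)).
Qed.

End Hamiltonian.

Section State.
Variables (C : numClosedFieldType) (psi : cfg -> C).

Definition cutmx (X : {set 'I_3}) : 'M[C]_(#|{: cfgOn X}|, #|{: cfgOn (~: X)}|) :=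
  \matrix_(a, c) psi (join X (val (enum_val a)) (val (enum_val c))).

Lemma marginal_cutmx (X : {set 'I_3}) :
  toMx (marginal psi (X:=X)) = cutmx X *m cutmx X ^t*.
Proof.
apply/matrixP => a b; rewrite !mxE /marginal big_enum_val /=.
by apply: eq_bigr => c _; rewrite !mxE.
Qed.

Lemma marginal_setC_cutmx (X : {set 'I_3}) :
  toMx (marginal psi (X:=~: X)) = (cutmx X)^T *m (cutmx X)^T ^t*.
Proof.
have sum_setCK (F : cfg -> C) :
    \sum_(c : cfgOn (~: ~: X)) F (val c) = \sum_(c : cfgOn X) F (val c).
  by rewrite setCK.
apply/matrixP => a b; rewrite !mxE /marginal.
rewrite (sum_setCK (fun c => psi (join (~: X) (val (enum_val a)) c) *
                             (psi (join (~: X) (val (enum_val b)) c))^*)).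
by rewrite big_enum_val /=; apply: eq_bigr => c _; rewrite !mxE !join_setC.
Qed.

Lemma mxtrace_marginal (X : {set 'I_3}) : normalized psi ->
  \tr (toMx (marginal psi (X:=X))) = 1.
Proof.
move=> <-; rewrite -(sum_cfgOn_join X (fun x => psi x * (psi x)^*)).
rewrite /mxtrace [RHS]big_enum_val /=; apply: eq_bigr => a _.
by rewrite mxE /marginal.
Qed.

Lemma spectrum_cut1 (i : 'I_3) : normalized psi ->
  exists r1 r2 : C, [/\ 0 <= r2 <= r1, r1 + r2 = 1,
    perm_eq (eigs (toMx (marginal psi (X:=[set i])))) [:: r1; r2] &
    perm_eq (eigs (toMx (marginal psi (X:=~: [set i])))) [:: r1; r2; 0; 0]].
Proof.
move=> psi_n; have [j [k [jk eC]]] := setC1_ord3 i.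
have [a [b eab]] : exists a b, eigs (toMx (marginal psi (X:=[set i]))) = [:: a; b].
  case: eigs (size_eigs (toMx (marginal psi (X:=[set i])))) => [|a [|b [|? ?]]];
    by rewrite card_cfgOn1 // => _; exists a, b.
have eig_ge0 z : z \in [:: a; b] -> 0 <= z.
  by rewrite -eab marginal_cutmx => /eigs_gram_ge0.
have a_ge0 : 0 <= a by apply: eig_ge0; rewrite mem_head.
have b_ge0 : 0 <= b by apply: eig_ge0; rewrite !inE eqxx orbT.
have ab1 : a + b = 1.
  by rewrite -(mxtrace_marginal [set i] psi_n) mxtrace_eigs eab big_cons big_seq1.
have eigsC : perm_eq (eigs (toMx (marginal psi (X:=~: [set i])))) [:: a; b; 0; 0].
  rewrite marginal_setC_cutmx; apply: perm_trans (perm_eigs_gram_trmx _ _) _.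
    by rewrite card_cfgOn1 eC card_cfgOn2.
  by rewrite -marginal_cutmx eab card_cfgOn1 eC card_cfgOn2.
have swap s : perm_eq [:: a, b & s] [:: b, a & s] by rewrite (perm_catCA [:: a] [:: b] s).
case/orP: (real_leVge (ger0_real a_ge0) (ger0_real b_ge0)) => [le_ab|le_ba].
  exists b, a; rewrite addrC eab swap a_ge0; split => //.
  exact: perm_trans eigsC (swap _).
by exists a, b; rewrite eab b_ge0.
Qed.

Lemma passiveX_cut1 (i : 'I_3) : normalized psi ->
  exists r1 r2 : C, [/\ 0 <= r2 <= r1, r1 + r2 = 1,
    passiveX psi [set i] = r2, passiveX psi (~: [set i]) = r2 &
    \det (toMx (marginal psi (X:=[set i]))) = r1 * r2].
Proof.
move=> psi_n; have [j [k [jk eC]]] := setC1_ord3 i.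
have [r1 [r2 [r2_r1 r12 eigs1 eigsC]]] := spectrum_cut1 i psi_n.
have /andP[r2_ge0 le_r21] := r2_r1.
have r2R : r2 \is Num.real by rewrite ger0_real.
have r1R : r1 \is Num.real by rewrite ger0_real // (le_trans r2_ge0).
exists r1, r2; split => //.
- rewrite /passiveX (passiveEnergyE eigs1 _ _ (perm_eigs_hamX1 C i)) /=.
  + by rewrite card_cfgOn1 !big_ord_recl big_ord0 /= mulr0 mulr1 add0r addr0.
  + by rewrite r1R r2R.
  + by rewrite le_r21.
  + by rewrite real0 real1.
  + by rewrite ler01.
- rewrite /passiveX (passiveEnergyE (e := [:: 0; 1; 1; 2]) eigsC) /=.
  + rewrite eC card_cfgOn2 // !big_ord_recl big_ord0 /=.
    by rewrite mulr0 mulr1 !mul0r add0r !addr0.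
  + by rewrite r1R r2R real0.
  + by rewrite le_r21 r2_ge0 lexx.
  + by rewrite eC perm_eigs_hamX2.
  + by rewrite real0 real1 realn.
  + by rewrite ler01 lexx ler1n.
- by rewrite det_eigs (perm_big _ eigs1) /= big_cons big_seq1.
Qed.

Lemma det_marginal_product (k : 'I_3) :
  productAcross psi k -> \det (toMx (marginal psi (X:=[set k]))) = 0.
Proof.
case=> phi [chi [phi_k psi_prod]]; rewrite marginal_cutmx.
pose u := \col_(a < #|{: cfgOn [set k]}|) chi (val (enum_val a) k).
pose v := \row_(c < #|{: cfgOn (~: [set k])}|)
            phi (join [set k] [ffun=> false] (val (enum_val c))).
have cut_uv : cutmx [set k] = u *m v.
  apply/matrixP => a c; rewrite !mxE big_ord1 !mxE psi_prod ffunE set11 mulrC.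
  by congr (_ * _); apply: phi_k => i ik; rewrite !ffunE inE (negbTE ik).
apply: det_rank_lt; rewrite cut_uv.
apply: leq_ltn_trans (mxrankM_maxl _ _) _; apply: leq_ltn_trans (mxrankM_maxl _ _) _.
by apply: leq_ltn_trans (rank_leq_col u) _; rewrite card_cfgOn1.
Qed.

End State.



Section NormalizedState.
Variables (C : numClosedFieldType) (psi : cfg -> C).
Hypothesis psi_normalized : normalized psi.

Lemma passiveX_setC1 (i : 'I_3) : passiveX psi (~: [set i]) = passiveX psi [set i].
Proof. by have [r1 [r2 [_ _ -> -> _]]] := passiveX_cut1 i psi_normalized. Qed.

Lemma passiveX_set1_le (i : 'I_3) : passiveX psi [set i] <= 2^-1.
Proof.
have [r1 [r2 [/andP[_ le_r21] r12 -> _ _]]] := passiveX_cut1 i psi_normalized.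
by rewrite -[2^-1]mul1r ler_pdivlMr ?ltr0n // mulr_natr mulr2n -r12 lerD2r.
Qed.

Lemma passiveX_set1_eq0 (i : 'I_3) :
  \det (toMx (marginal psi (X:=[set i]))) = 0 -> passiveX psi [set i] = 0.
Proof.
have [r1 [r2 [/andP[r2_ge0 le_r21] _ -> _ ->]]] := passiveX_cut1 i psi_normalized.
move/eqP; rewrite mulf_eq0 => /orP[/eqP r10|/eqP //].
by apply/le_anti; rewrite r2_ge0 andbT -r10.
Qed.

End NormalizedState.

Lemma sum_subsets_ord3 (R : nmodType) (f : {set 'I_3} -> R) :
  f set0 = 0 -> f setT = 0 ->
  \sum_(X : {set 'I_3}) f X = \sum_(i : 'I_3) (f [set i] + f (~: [set i])).
Proof.
move=> f0 fT.
have f_other (X : {set 'I_3}) : #|X| != 1 -> #|X| != 2 -> f X = 0.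
  have := max_card (mem X); rewrite card_ord.
  case cardX: #|X| => [|[|[|[|n]]]] // _ _ _; first by rewrite (cards0_eq cardX).
  suff -> : X = setT by [].
  by apply/eqP; rewrite eqEcard subsetT cardsT card_ord cardX.
have sum1 : \sum_(X : {set 'I_3} | #|X| == 1) f X = \sum_i f [set i].
  rewrite -[RHS](big_imset f (in2W set1_inj)) /=; apply: eq_bigl => X.
  by apply/cards1P/imsetP => [[i ->]|[i _ ->]]; exists i.
have sum2 : \sum_(X : {set 'I_3} | #|X| == 2) f X = \sum_i f (~: [set i]).
  rewrite -[RHS](big_imset f (in2W (inj_comp (@setC_inj _) set1_inj))) /=.
  apply: eq_bigl => X; apply/idP/imsetP => [/eqP cardX|[i _ ->]]; last first.
    by rewrite cardsC1 card_ord.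
  have /cards1P [i eCX] : #|~: X| == 1.
    by have := cardsC X; rewrite card_ord cardX => -[/eqP].
  by exists i => //=; rewrite -eCX setCK.
rewrite big_split -sum1 -sum2 (bigID (fun X : {set 'I_3} => #|X| == 1)) /=.
rewrite [X in _ + X](bigID (fun X : {set 'I_3} => #|X| == 2)) /=.
rewrite [X in _ + (_ + X)]big1; last first.
  by move=> X /andP[]; apply: f_other.
rewrite addr0; congr (_ + _); apply: eq_bigl => X.
by case: eqP => // ->.
Qed.

Lemma sum_Delta (C : numClosedFieldType) (psi : cfg -> C) :
  \sum_(X : {set 'I_3}) Delta psi X =
  \sum_(i : 'I_3) (passiveX psi [set i] + passiveX psi (~: [set i])) *+ 2.
Proof.
rewrite sum_subsets_ord3 /Delta ?eqxx ?orbT //; apply: eq_bigr => i _.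
have cut_proper (X : {set 'I_3}) :
    #|X| \in [:: 1; 2]%N -> (X == set0) || (X == setT) = false.
  move=> cardX; apply/negbTE; apply: contraTN cardX.
  by case/orP => /eqP ->; rewrite ?cards0 ?cardsT ?card_ord.
rewrite !cut_proper ?cards1 ?cardsC1 ?card_ord // setCK.
by rewrite mulr2n [passiveX _ (~: _) + _]addrC.
Qed.

Theorem mainTheorem5 (C : numClosedFieldType) (psi : cfg -> C) :
  normalized psi -> 2^-1 < ME psi -> genuinelyEntangled psi.
Proof.
move=> psi_n ME_gt k psi_k.
pose lam i := passiveX psi [set i].
have lam_k : lam k = 0.
  by apply: passiveX_set1_eq0 => //; apply: det_marginal_product.
have ME_lam : ME psi = 2^-1 * \sum_i lam i.
  rewrite /ME sum_Delta !mulr_sumr; apply: eq_bigr => i _.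
  by rewrite passiveX_setC1 // -mulr2n -mulrnA -mulr_natr /lam; field.
have sum_lam : \sum_i lam i <= 1.
  rewrite (bigD1 k) //= lam_k add0r.
  apply: le_trans (ler_sum _ (fun i _ => passiveX_set1_le psi_n i)) _.
  by rewrite sumr_const cardC1 card_ord /= -[_ *+ 2]mulr_natr mulVf ?pnatr_eq0.
have ME_le : ME psi <= 2^-1 by rewrite ME_lam ler_piMr ?invr_ge0 ?ler0n.
by have := lt_le_trans ME_gt ME_le; rewrite ltxx.
Qed.
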